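(* Let $\mathbb{K}$ be a Hausdorff non-discrete topological field, let $E$ and $F$ be (Hausdorff) topological $\mathbb{K}$-vector spaces, $N$ a closed vector subspace of $E$, $E_1:=E/N$ and $q\colon E\to E_1$ the quotient map. Let $k\in\mathbb{N}_0\cup\{\infty\}$, let $f_1\colon U_1\to F$ be a map defined on an open subset $U_1\subseteq E_1$, and let $U\subseteq E$ be an open subset with $q(U)=U_1$. Then $f_1$ is of class $C^k$ if and only if $f:=f_1\circ q|_U\colon U\to F$ is of class $C^k$.
   Context: All topological vector spaces are Hausdorff; products carry the product topology. For open $V$ in a topological $\mathbb{K}$-vector space $X$, $V^{[1]}:=\{(x,v,t)\in V\times X\times\mathbb{K}:x+tv\in V\}$. A map $g\colon V\to Y$ into a topological $\mathbb{K}$-vector space is $C^0$ if continuous, and $C^1$ if continuous and there is a continuous $g^{[1]}\colon V^{[1]}\to Y$ with $g(x+tv)-g(x)=t\,g^{[1]}(x,v,t)$ for all $(x,v,t)\in V^{[1]}$; recursively $V^{[k+1]}=(V^{[k]})^{[1]}$, $g$ is $C^{k+1}$ if $C^k$ and $g^{[k]}$ is $C^1$, $g^{[k+1]}=(g^{[k]})^{[1]}$; $C^\infty$ = $C^k$ for all $k\in\mathbb{N}_0$. *)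

From HB Require Import structures.
From mathcomp Require Import all_boot all_order all_algebra.
From mathcomp Require Import all_classical all_reals topology pseudometric_normed_Zmodule.
Set Implicit Arguments. Unset Strict Implicit. Unset Printing Implicit Defensive.
Import Order.TTheory GRing.Theory.
Local Open Scope classical_set_scope.
Local Open Scope ring_scope.

(* topological space + K-vector space (no axioms): the ambient structure for
   the iterated spaces X^[k] *)
(* (a marker mixin, only needed because HB refuses two structures with the same
   mixins, and the library's own PreTopologicalLmodule requires a numDomainType) *)
HB.mixin Record isPreTvs (K : pzRingType) E & Topological E & GRing.Lmodule K E := {
  pretvs_marker : True
}.

#[short(type="preTvsType")]
HB.structure Definition PreTvs (K : pzRingType) :=
  {E of Topological E & GRing.Lmodule K E & isPreTvs K E}.

HB.mixin Record isTopField K & Topological K & GRing.Field K := {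
  tf_add : continuous (fun x : K * K => x.1 + x.2);
  tf_opp : continuous (fun x : K => - x);
  tf_mul : continuous (fun x : K * K => x.1 * x.2);
  tf_inv : forall x : K, x != 0 -> {for x, continuous (fun y : K => y^-1)};
  tf_hausdorff : hausdorff_space K;
  tf_nondiscrete : ~ (forall A : set K, open A)
}.

#[short(type="topFieldType")]
HB.structure Definition TopField :=
  {K of Topological K & GRing.Field K & isTopField K}.

HB.instance Definition _ (K : topFieldType) := Topological.copy K^o K.

HB.mixin Record PreTvs_isTvs (K : topFieldType) E & PreTvs K E := {
  tvs_add : continuous (fun x : E * E => x.1 + x.2);
  tvs_scale : continuous (fun x : K * E => x.1 *: x.2);
  tvs_hausdorff : hausdorff_space E
}.

#[short(type="tvsType")]
HB.structure Definition Tvs (K : topFieldType) :=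
  {E of PreTvs K E & PreTvs_isTvs K E}.

HB.instance Definition _ (K : topFieldType) := isPreTvs.Build K K^o I.
HB.instance Definition _ (K : pzRingType) (X Y : preTvsType K) :=
  isPreTvs.Build K (X * Y)%type I.

Section Ck.
Context {K : topFieldType}.

Definition sp1 (X : preTvsType K) : preTvsType K :=
  [the preTvsType K of (X * X * K^o)%type].

Definition bracket1 (X : preTvsType K) (V : set X) : set (sp1 X) :=
  [set p | V p.1.1 /\ V (p.1.1 + (p.2 : K) *: p.1.2)].

Definition diffquot (X : preTvsType K) (Y : tvsType K) (V : set X)
    (g : X -> Y) (g1 : sp1 X -> Y) : Prop :=
  {within bracket1 V, continuous g1} /\
  forall p : sp1 X, bracket1 V p ->
    g (p.1.1 + (p.2 : K) *: p.1.2) - g p.1.1 = (p.2 : K) *: g1 p.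

(* g : V -> Y (represented by a total function, only its values on V
   matter) is of class C^k. C^(k+1) <-> C^1 with g^[1] of class C^k, which
   unfolds to the existence of the chain g, g^[1], ..., g^[k]. *)
Fixpoint isCk (Y : tvsType K) (k : nat) :
    forall (X : preTvsType K), set X -> (X -> Y) -> Prop :=
  match k with
  | 0 => fun X V g => {within V, continuous g}
  | k'.+1 => fun X V g =>
      {within V, continuous g} /\
      exists g1 : sp1 X -> Y, diffquot V g g1 /\ @isCk Y k' (sp1 X) (bracket1 V) g1
  end.

(* k in N_0 \cup {oo}: None stands for oo *)
Definition isCk_ext (Y : tvsType K) (k : option nat) (X : preTvsType K)
    (V : set X) (g : X -> Y) : Prop :=
  match k with
  | Some n => isCk n V g
  | None => forall n, isCk n V g
  end.

End Ck.

(* Forward: [f1 \o q] is C^k with [(f1 \o q)^[1] = f1^[1] \o (q × q × id)], by the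
   linearity and continuity of [q].  Backward: [q × q × id] is again an open linear
   surjection, and it maps [U^[1]] onto [U1^[1]]; by induction on [k] it suffices to
   see that [f^[1]] factors through it.  For [t != 0], [f^[1](x, v, t)] is the
   difference quotient of [f1] at [(q x, q v, t)], so it depends only on the image;
   for [t = 0] the same follows by continuity, as 0 is not isolated in [K] and [F] is
   Hausdorff.  Continuity descends along [q] because [q] is open. *)

From HB Require Import structures.
From mathcomp Require Import all_boot all_order all_algebra.
From mathcomp Require Import all_classical all_reals topology.
Import Order.TTheory GRing.Theory.
Local Open Scope classical_set_scope.
Local Open Scope ring_scope.

Definition open_map {T U : topologicalType} (f : T -> U) :=
  forall A, open A -> open (f @` A).

Lemma continuous_pair {T U V : topologicalType} (f : T -> U) (g : T -> V) :
  continuous f -> continuous g -> continuous (fun x => (f x, g x)).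
Proof. by move=> cf cg x; exact: cvg_pair (cf x) (cg x). Qed.

Lemma continuous_prod_map {T U T' U' : topologicalType} (f : T -> U) (g : T' -> U') :
  continuous f -> continuous g -> continuous (fun p => (f p.1, g p.2)).
Proof.
move=> cf cg; apply: continuous_pair => p.
- exact: continuous_comp cvg_fst (cf _).
- exact: continuous_comp cvg_snd (cg _).
Qed.

Lemma open_map_prod {T U T' U' : topologicalType} (f : T -> U) (g : T' -> U') :
  open_map f -> open_map g -> open_map (fun p => (f p.1, g p.2)).
Proof.
move=> fo go A oA; rewrite openE => _ [p Ap <-].
have := oA; rewrite openE => /(_ p Ap) [[B C] /= [nB nC] BCA].
move: nB nC; rewrite !nbhsE => -[B' [oB' B'p] B'B] [C' [oC' C'p] C'C].
exists (f @` B', g @` C') => /=.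
  by split; apply: open_nbhs_nbhs; split; [exact: fo|exists p.1|exact: go|exists p.2].
move=> [_ _] /= [[a B'a <-] [b C'b <-]].
by exists (a, b) => //; apply: BCA; split; [exact: B'B|exact: C'C].
Qed.

Lemma within_continuous_comp_subset {T U W : topologicalType} (A : set T) (B : set U)
    (f : T -> U) (g : U -> W) :
  continuous f -> f @` A `<=` B -> {within B, continuous g} ->
  {within A, continuous (g \o f)}.
Proof.
move=> cf fAB /subspace_continuousP cg; apply/subspace_continuousP => x Ax.
have fx_within : f @ within A (nbhs x) --> within B (nbhs (f x)).
  move=> P BP; suff : nbhs x (fun y => A y -> P (f y)) by [].
  have BfP : nbhs x (fun y => B (f y) -> P (f y)) := cf x _ BP.
  by apply: filterS BfP => y BPy Ay; apply/BPy/fAB; exists y.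
exact: cvg_comp fx_within (cg _ (fAB _ (imageP _ Ax))).
Qed.

Lemma within_continuous_factor_open_map {T U Z : topologicalType} (q : T -> U)
    (V : set T) (g : U -> Z) (g' : T -> Z) :
  open_map q -> open V -> (forall x, V x -> g' x = g (q x)) ->
  {within V, continuous g'} -> {within q @` V, continuous g}.
Proof.
move=> qo oV g'E; rewrite !continuous_open_subspace //; last exact: qo.
move=> cg' _ /set_mem[x Vx <-] W /=; rewrite -g'E // => /(cg' x (mem_set Vx)).
rewrite nbhsE => -[O [oO Ox] OW]; have nV : nbhs x V by exact: open_nbhs_nbhs.
have : nbhs (q x) (q @` (O `&` V)).
  by apply: open_nbhs_nbhs; split; [apply: qo; exact: openI|exists x].
by apply: filterS => _ [z [Oz Vz] <-]; rewrite /= -g'E //; exact: OW.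
Qed.

Lemma exists_factor {A B C : Type} (c0 : C) {D : set A} {f : A -> B} {h : A -> C} :
  (forall a a', D a -> D a' -> f a = f a' -> h a = h a') ->
  exists G : B -> C, forall a, D a -> h a = G (f a).
Proof.
move=> hf; suff /choice[G GP] : forall b, exists c, forall a, D a -> f a = b -> h a = c.
  by exists G => a Da; exact: GP.
move=> b; have [[a [Da <-]]|Nb] := pselect (exists a, D a /\ f a = b).
  by exists (h a) => a' Da'; exact: hf.
by exists c0 => a Da fab; exfalso; apply: Nb; exists a.
Qed.

HB.instance Definition _ (K : topFieldType) :=
  PreTvs_isTvs.Build K K^o tf_add tf_mul tf_hausdorff.

Section TopField.
Context {K : topFieldType}.

Lemma dnbhs0_proper : ProperFilter (0 : K)^'.
Proof.
apply: Build_ProperFilter_ex => P P0'; apply: contrapT => noP.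
have {}P0' : nbhs (0 : K) (fun s => s != 0 -> P s) := P0'.
apply: (@tf_nondiscrete K) => B; rewrite openE => b Bb.
have isolated0 : nbhs (0 : K) [set 0].
  apply: filterS P0' => s Ps; have [//|/Ps Ps'] := eqVneq s 0.
  by exfalso; apply: noP; exists s.
have shift_b : {for b, continuous (fun s : K => s - b)}.
  apply: (@continuous_comp _ _ _ (fun s => (s, - b)) (fun z : K * K => z.1 + z.2)).
    by apply: continuous_pair; [move=> ?; exact: cvg_id|exact: cst_continuous].
  exact: tf_add.
have : nbhs b ((fun s : K => s - b) @^-1` [set 0]) by apply: shift_b; rewrite /= subrr.
by apply: filterS => s /= /eqP; rewrite subr_eq0 => /eqP ->.
Qed.

Lemma dnbhs0_eq (Y : topologicalType) (phi psi : K -> Y) : hausdorff_space Y ->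
  {for 0, continuous phi} -> {for 0, continuous psi} ->
  (\forall s \near (0 : K)^', phi s = psi s) -> phi 0 = psi 0.
Proof.
move=> hY cphi cpsi E; have P0' := dnbhs0_proper.
have cvg0 (f : K -> Y) : {for 0, continuous f} -> f @ (0 : K)^' --> f 0.
  by move=> cf; apply: cvg_trans cf; apply: cvg_app; exact: nbhs_dnbhs.
apply: (cvg_unique hY (cvg0 _ cphi)).
apply: cvg_trans (cvg0 _ cpsi); apply: near_eq_cvg.
by apply: filterS E => s /esym.
Qed.

Definition axpy {X : preTvsType K} (p : sp1 X) : X := p.1.1 + (p.2 : K) *: p.1.2.

Definition axpy_continuous (X : preTvsType K) := continuous (@axpy X).

Definition sp1_map {X X1 : preTvsType K} (f : X -> X1) : sp1 X -> sp1 X1 :=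
  fun p => ((f p.1.1, f p.1.2), p.2).

Lemma tvs_axpy_continuous (E : tvsType K) : axpy_continuous E.
Proof.
move=> p; apply: continuous2_cvg; first exact: (tvs_add (_, _)).
  exact: cvg_comp cvg_fst cvg_fst.
apply: continuous2_cvg; first exact: (tvs_scale (_, _)).
  exact: cvg_snd.
exact: cvg_comp cvg_fst cvg_snd.
Qed.

Lemma open_bracket1 {X : preTvsType K} {V : set X} :
  axpy_continuous X -> open V -> open (bracket1 V).
Proof.
move=> cX oV.
have -> : bracket1 V = (fun p : sp1 X => p.1.1) @^-1` V `&` axpy @^-1` V by [].
apply: openI; last exact: (continuousP _).1 cX _ oV.
by apply: (continuousP _).1 oV => p; exact: cvg_comp cvg_fst cvg_fst.
Qed.

Lemma continuous_sp1_map {X X1 : preTvsType K} {f : X -> X1} :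
  continuous f -> continuous (sp1_map f).
Proof.
move=> cf; apply: (@continuous_prod_map _ _ _ _ (fun a => (f a.1, f a.2)) id).
  exact: continuous_prod_map.
by move=> ?; exact: cvg_id.
Qed.

Lemma open_map_sp1_map {X X1 : preTvsType K} {f : X -> X1} :
  open_map f -> open_map (sp1_map f).
Proof.
move=> fo; apply: (@open_map_prod _ _ _ _ (fun a => (f a.1, f a.2)) id).
  exact: open_map_prod.
by move=> A; rewrite image_id.
Qed.

Lemma sp1_map_surj {X X1 : preTvsType K} {f : X -> X1} :
  (forall y, exists x, f x = y) -> forall P : sp1 X1, exists p, sp1_map f p = P.
Proof.
by move=> fs [[y w] t]; have [x <-] := fs y; have [v <-] := fs w; exists ((x, v), t).
Qed.

Lemma axpy_continuous_sp1 {X : preTvsType K} :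
  axpy_continuous X -> axpy_continuous (sp1 X).
Proof.
move=> cX.
have axpy_proj (X2 : preTvsType K) (pi : sp1 X -> X2) : continuous pi ->
    axpy_continuous X2 -> continuous (fun P => axpy (sp1_map pi P)).
  move=> cpi cX2 P; apply: (@continuous_comp _ _ _ (sp1_map pi) axpy); last exact: cX2.
  exact: continuous_sp1_map.
(* each coordinate of [axpy] on [sp1 X] is an [axpy] on [X] or on [K] *)
rewrite /axpy_continuous; have -> : @axpy (sp1 X) = fun P =>
    ((axpy (sp1_map (fun a : sp1 X => a.1.1) P), axpy (sp1_map (fun a : sp1 X => a.1.2) P)),
     axpy (sp1_map (fun a : sp1 X => a.2) P)).
  by apply: funext => -[[[[x v] t] [[x' v'] t']] s].
apply: continuous_pair; first apply: continuous_pair.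
- by apply: axpy_proj => // a; exact: cvg_comp cvg_fst cvg_fst.
- by apply: axpy_proj => // a; exact: cvg_comp cvg_fst cvg_snd.
- by apply: axpy_proj; [move=> a; exact: cvg_snd|exact: tvs_axpy_continuous].
Qed.

Section Sp1Map.
Context {X X1 : preTvsType K} {q : X -> X1}.
Hypothesis qM : forall t : K, {morph q : x v / x + t *: v}.

Lemma axpy_sp1_map p : axpy (sp1_map q p) = q (axpy p).
Proof. by rewrite /axpy /= qM. Qed.

Lemma sp1_map_morph (t : K) : {morph sp1_map q : p p' / p + t *: p'}.
Proof. by move=> [[x v] s] [[x' v'] s']; rewrite /sp1_map /= !qM. Qed.

Lemma sp1_map_bracket1_sub {V : set X} {V1 : set X1} :
  q @` V `<=` V1 -> sp1_map q @` bracket1 V `<=` bracket1 V1.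
Proof.
move=> qV _ [p [Vx Vy] <-]; split; first by apply: qV; exists p.1.1.
by apply: qV; exists (axpy p) => //; rewrite -axpy_sp1_map.
Qed.

Lemma sp1_map_bracket1 (V : set X) : (forall y, exists x, q x = y) ->
  sp1_map q @` bracket1 V = bracket1 (q @` V).
Proof.
move=> qs; apply/seteqP; split; first exact: sp1_map_bracket1_sub.
move=> [[_ w] t] [/= [x Vx <-] [z Vz qz]].
have [->|t0] := eqVneq t 0.
  have [v <-] := qs w; exists ((x, v), 0) => //.
  by split => //=; rewrite scale0r addr0.
exists ((x, t^-1 *: (z - x)), t); first by split => //=; rewrite scalerKV // addrC subrK.
congr (_, _, _); apply: (scalerI t0); apply: (addrI (q x)).
by rewrite -qM scalerKV // addrC subrK qz.
Qed.

End Sp1Map.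

Section DiffquotFiber.
Context {X X1 : preTvsType K} {Y : tvsType K} {q : X -> X1}.
Hypothesis qM : forall t : K, {morph q : x v / x + t *: v}.
Context {V : set X} {g : X1 -> Y} {g' : X -> Y} {g1 : sp1 X -> Y}.
Hypothesis g'E : forall x, V x -> g' x = g (q x).
Hypothesis dq : diffquot V g' g1.

Lemma diffquot_sp1_map p : bracket1 V p ->
  p.2 *: g1 p = g (axpy (sp1_map q p)) - g (sp1_map q p).1.1.
Proof. by case=> Vx Vy; rewrite -dq.2 // !g'E // axpy_sp1_map. Qed.

Lemma diffquot_fiber_neq0 p p' : bracket1 V p -> bracket1 V p' ->
  sp1_map q p = sp1_map q p' -> p.2 != 0 -> g1 p = g1 p'.
Proof.
move=> Bp Bp' qpp' t0; have t_eq : p.2 = p'.2 := congr1 snd qpp'.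
by apply: (scalerI t0); rewrite [in RHS]t_eq !diffquot_sp1_map // qpp'.
Qed.

Lemma diffquot_fiber : open (bracket1 V) -> forall p p',
  bracket1 V p -> bracket1 V p' -> sp1_map q p = sp1_map q p' -> g1 p = g1 p'.
Proof.
move=> oB [[x v] t] [[x' v'] t'] Bp Bp' [qx qv tt']; subst t'.
have same_image s : sp1_map q ((x, v), s) = sp1_map q ((x', v'), s).
  by rewrite /sp1_map /= qx qv.
have [t0|t_neq0] := eqVneq t 0; first last.
  exact: diffquot_fiber_neq0 Bp Bp' (same_image t) t_neq0.
(* [t = 0]: let [s -> 0] through [s != 0], possible as 0 is not isolated in [K] *)
pose line (y w : X) (s : K) : sp1 X := ((y, w), s).
have cline y w : continuous (line y w).
  by apply: continuous_pair; [exact: cst_continuous|move=> ?; exact: cvg_id].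
have cg1 r : bracket1 V r -> {for r, continuous g1}.
  by move: dq.1; rewrite continuous_open_subspace // => + Br; apply; rewrite inE.
have near_line y w :
    bracket1 V (line y w 0) -> \forall s \near (0 : K), bracket1 V (line y w s).
  by move=> B0; apply: cline; exact: open_nbhs_nbhs.
rewrite {}t0 in Bp Bp' *.
apply: (@dnbhs0_eq _ (g1 \o line x v) (g1 \o line x' v') tvs_hausdorff).
- exact: continuous_comp (cline x v 0) (cg1 _ Bp).
- exact: continuous_comp (cline x' v' 0) (cg1 _ Bp').
near=> s; apply: diffquot_fiber_neq0 => /=.
- by near: s; apply: nbhs_dnbhs; exact: near_line.
- by near: s; apply: nbhs_dnbhs; exact: near_line.
- exact: same_image.
- by near: s; exact: nbhs_dnbhs_neq.
Unshelve. all: by end_near.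
Qed.

End DiffquotFiber.

Lemma isCk_continuous {Y : tvsType K} {n} {X : preTvsType K} {V : set X} {g : X -> Y} :
  isCk n V g -> {within V, continuous g}.
Proof. by case: n => [|n] //= []. Qed.

Lemma isCk_comp (Y : tvsType K) n : forall (X X1 : preTvsType K) (q : X -> X1)
    (V : set X) (V1 : set X1) (g : X1 -> Y),
  (forall t : K, {morph q : x v / x + t *: v}) -> continuous q -> q @` V `<=` V1 ->
  isCk n V1 g -> isCk n V (g \o q).
Proof.
elim: n => [|n IHn] X X1 q V V1 g qM cq qV; first exact: within_continuous_comp_subset.
move=> [cg [g1 [[_ dq] Ck1]]].
have qB := sp1_map_bracket1_sub qM qV.
have Ck1q := IHn _ _ _ _ _ _ (sp1_map_morph qM) (continuous_sp1_map cq) qB Ck1.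
split; first exact: within_continuous_comp_subset cq qV cg.
exists (g1 \o sp1_map q); split => //; split; first exact: isCk_continuous Ck1q.
by move=> p Bp; rewrite /= qM; exact: dq (qB _ (imageP _ Bp)).
Qed.

Lemma isCk_factor (Y : tvsType K) n : forall (X X1 : preTvsType K) (q : X -> X1)
    (V : set X) (g : X1 -> Y) (g' : X -> Y),
  axpy_continuous X -> (forall t : K, {morph q : x v / x + t *: v}) ->
  (forall y, exists x, q x = y) -> open_map q -> open V ->
  (forall x, V x -> g' x = g (q x)) -> isCk n V g' -> isCk n (q @` V) g.
Proof.
elim: n => [|n IHn] X X1 q V g g' cX qM qs qo oV g'E.
  exact: within_continuous_factor_open_map.
move=> [cg' [g1 [dq Ck1]]].
have oB := open_bracket1 cX oV.
have [G1 g1E] := exists_factor 0 (diffquot_fiber qM g'E dq oB).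
have CkG1 : isCk n (bracket1 (q @` V)) G1.
  rewrite -sp1_map_bracket1 //.
  exact: IHn (axpy_continuous_sp1 cX) (sp1_map_morph qM) (sp1_map_surj qs)
    (open_map_sp1_map qo) oB g1E Ck1.
split; first exact: within_continuous_factor_open_map qo oV g'E cg'.
exists G1; split => //; split; first exact: isCk_continuous CkG1.
rewrite -sp1_map_bracket1 // => _ [p Bp <-].
by rewrite -g1E //; exact: esym (diffquot_sp1_map qM g'E dq _ Bp).
Qed.

End TopField.

Theorem lemma10p4 (K : topFieldType) (E F E1 : tvsType K)
  (N : set E)
  (hN0 : N 0)
  (hNadd : forall x y, N x -> N y -> N (x + y))
  (hNscale : forall (a : K) x, N x -> N (a *: x))
  (hNclosed : closed N)
  (q : {linear E -> E1})
  (hqker : forall x, q x = 0 <-> N x)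
  (hqsurj : forall y : E1, exists x : E, q x = y)
  (hqcont : continuous q)
  (hqopen : forall A : set E, open A -> open (q @` A))
  (k : option nat)
  (U1 : set E1) (hU1 : open U1) (f1 : E1 -> F)
  (U : set E) (hU : open U) (hqU : q @` U = U1) :
  isCk_ext k U1 f1 <-> isCk_ext k U (f1 \o q).
Proof.
have qM (t : K) : {morph q : x v / x + t *: v} by move=> x v; rewrite linearD linearZ.
have Ck_iff n : isCk n U1 f1 <-> isCk n U (f1 \o q).
  split; first by apply: isCk_comp => //; rewrite hqU.
  by rewrite -hqU; apply: isCk_factor (tvs_axpy_continuous E) qM hqsurj hqopen hU _.
by case: k => [n|] /=; [exact: Ck_iff|split=> Ck n; apply/Ck_iff].
Qed.
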